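(* Let $X$ and $Y$ be infinite metrizable compact spaces and let $Z$ be a metrizable space containing a homeomorphic copy of $\mathbb R$. Then a compact space $K$ embeds homeomorphically into $S(X\times Y,Z)$ if and only if $K$ is metrizable.
   Context: All compact spaces are assumed Hausdorff. For topological spaces $X,Y,Z$, a function $f:X\times Y\to Z$ is separately continuous if $y\mapsto f(x,y)$ is continuous for every $x\in X$ and $x\mapsto f(x,y)$ is continuous for every $y\in Y$. $S(X\times Y,Z)$ denotes the set of all separately continuous functions $X\times Y\to Z$. For $p=(a,b)\in X\times Y$, the cross of $p$ is $\mathrm{cr}\{p\}=(\{a\}\times Y)\cup(X\times\{b\})$. For $X,Y$ compact and $Z$ metrizable with a compatible metric $d$, $S(X\times Y,Z)$ carries the topology generated by the family of extended pseudometrics $d_c(s,t)=\sup_{p\in\mathrm{cr}\{c\}} d(s(p),t(p))$, $c\in X\times Y$ (the cross-uniform topology); it coincides with the cross-open topology, generated by the subbase of sets $\{s: s(A)\subseteq W\}$ with $W$ open in $Z$ and $A=\overline{G}\cap C$, where $C=\mathrm{cr}\{p\}$ for some $p$ and $G$ is open in $C$. *)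

From HB Require Import structures.
From mathcomp Require Import all_boot all_order all_algebra.
From mathcomp Require Import all_classical all_reals all_analysis.
Set Implicit Arguments. Unset Strict Implicit. Unset Printing Implicit Defensive.
Import Order.TTheory GRing.Theory Num.Theory.
Local Open Scope classical_set_scope.
Local Open Scope ring_scope.

Definition metrizable (R : realType) (T : topologicalType) : Prop :=
  exists d : T -> T -> R,
    [/\ (forall x y, 0 <= d x y),
        (forall x y, d x y = 0 <-> x = y),
        (forall x y, d x y = d y x),
        (forall x y z, d x z <= d x y + d y z) &
        (forall x, nbhs x = filter_from [set e | 0 < e] (fun e => [set y | d x y < e]))].

Definition embedding (A B : topologicalType) (f : A -> B) : Prop :=
  [/\ injective f, continuous f &
      forall U : set A, open U -> exists V : set B, open V /\ f @` U = range f `&` V].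

Definition embeds_into (A B : topologicalType) (S : set B) : Prop :=
  exists f : A -> B, (forall a, S (f a)) /\ embedding f.

Definition cross (X Y : Type) (c : X * Y) : set (X * Y) :=
  [set p | p.1 = c.1 \/ p.2 = c.2].

Definition crosses (X Y : Type) : set (X * Y) -> Prop :=
  fun A => exists c : X * Y, A = cross c.

Definition sep_continuous (X Y Z : topologicalType) (s : X * Y -> Z) : Prop :=
  (forall x : X, continuous (fun y : Y => s (x, y))) /\
  (forall y : Y, continuous (fun x : X => s (x, y))).

(* The function space X*Y -> Z with the cross-uniform topology: uniform
   convergence (w.r.t. the metric of Z) on every cross. *)
Definition cross_uniform (X Y : Type) (Z : uniformType) :=
  {family @crosses X Y, (X * Y) -> Z}.

Definition Ssep (X Y : topologicalType) (Z : uniformType) : set (cross_uniform X Y Z) :=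
  fun s => @sep_continuous X Y Z s.
Arguments cross_uniform : clear implicits.
Arguments Ssep : clear implicits.
Arguments metrizable : clear implicits.

From HB Require Import structures.
From mathcomp Require Import all_boot all_order all_algebra.
From mathcomp Require Import all_classical all_reals all_analysis lra.
From mathcomp Require finmap.
Import numFieldTopology.Exports.
Import Order.TTheory GRing.Theory Num.Theory.
Local Open Scope classical_set_scope.
Local Open Scope ring_scope.
Set Implicit Arguments. Unset Strict Implicit. Unset Printing Implicit Defensive.

(* A metrizable compact K embeds: take a point of X accumulated by a sequence [xs n]
   converging so fast that distinct [xs n], [xs m] are [2 * w n]-apart, and a dense
   sequence [q n] in K.  Then [dist_code k x = inf_n (d (x, xs n) + w n * min(1, d (k, q n)))]
   is jointly continuous and equals [w n * min(1, d (k, q n))] at [xs n], so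
   [k |-> g (dist_code k x)], constant in [y], is a continuous injection of K into
   S(X x Y, Z), hence an embedding by compactness.
   Conversely, if f embeds K, the continuous pseudometrics [d_Z (f k c, f k' c)], for [c]
   in a countable dense grid of X x Y, separate the points of K by separate continuity;
   a compact Hausdorff space with a countable separating family of continuous
   pseudometrics is metrizable. *)

(* [metrizable R T] unfolds to [exists d, compatible_metric d]. *)
Definition compatible_metric {R : realType} {T : topologicalType} (d : T -> T -> R) :=
  [/\ (forall x y, 0 <= d x y), (forall x y, d x y = 0 <-> x = y),
      (forall x y, d x y = d y x), (forall x y z, d x z <= d x y + d y z) &
      (forall x, nbhs x = filter_from [set e | 0 < e] (fun e => [set y | d x y < e]))].

Definition continuous_pseudometric {R : realType} {T : topologicalType} (d : T -> T -> R) :=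
  [/\ (forall x y, 0 <= d x y), (forall x, d x x = 0), (forall x y, d x y = d y x),
      (forall x y z, d x z <= d x y + d y z) &
      (forall x e, 0 < e -> nbhs x [set y | d x y < e])].

Definition dense_seq {R : realType} {T : Type} (d : T -> T -> R) (a : nat -> T) :=
  forall x e, 0 < e -> exists n, d x (a n) < e.

(* [compact_cover] is stated for pointed spaces only. *)
Definition pointed_at {T : topologicalType} (x : T) : Type := T.
HB.instance Definition _ (T : topologicalType) (x : T) :=
  Topological.copy (pointed_at x) T.
HB.instance Definition _ (T : topologicalType) (x : T) :=
  isPointed.Build (pointed_at x) x.

Lemma compact_finite_subcover {T : topologicalType} {I : choiceType} (f : I -> set T) :
  compact [set: T] -> (forall i, open (f i)) -> (forall x, exists i, f i x) ->
  exists s : seq I, forall x, exists2 i, i \in s & f i x.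
Proof.
move=> cT fo fcov.
have [[x0 _]|T0] := pselect (exists x : T, True); last first.
  by exists [::] => x; exfalso; apply: T0; exists x.
have : @cover_compact (pointed_at x0) setT by rewrite -compact_cover.
case/(_ I setT f) => [i _|x _|D _ cov]; first exact: fo.
- by have [i fi] := fcov x; exists i.
- by exists (finmap.enum_fset D) => x; have [i /= iD fi] := cov x Logic.I; exists i.
Qed.

Lemma halving_seq {R : realType} {T : Type} (u : T -> R) :
  (forall e, 0 < e -> exists y, 0 < u y < e) ->
  exists xs : nat -> T, (forall n, 0 < u (xs n) < 1) /\
    (forall n m, (n < m)%N -> u (xs m) < u (xs n) / 2).
Proof.
move=> small.
have small' e : exists y, 0 < e -> 0 < u y < e.
  have [e0|_] := ltP 0 e; first by have [y hy] := small e e0; exists y.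
  by have [y _] := small 1 ltr01; exists y.
have [next nextP] := choice small'.
pose xs n := iter n (fun y => next (u y / 2)) (next 1).
have step n : 0 < u (xs n) -> 0 < u (xs n.+1) < u (xs n) / 2.
  by move=> pos; apply: nextP; rewrite divr_gt0.
have in01 n : 0 < u (xs n) < 1.
  elim: n => [|n /andP[pos lt1]]; first exact: nextP ltr01.
  by have /andP[pos' lt] := step n pos; rewrite pos' /=; lra.
exists xs; split => // n m.
elim: m => [//|m IH]; rewrite ltnS leq_eqVlt => /orP[/eqP->|nm].
  by have /andP[] := step m (proj1 (andP (in01 m))).
have /andP[pos _] := in01 m; have /andP[_ lt] := step m pos.
have := IH nm; lra.
Qed.

Section compatible_metric.
Context {R : realType} {T : topologicalType} {d : T -> T -> R}.
Hypothesis dm : compatible_metric d.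

Lemma cmetric_ge0 x y : 0 <= d x y. Proof. by case: dm. Qed.
Lemma cmetric_eq0 x y : d x y = 0 <-> x = y. Proof. by case: dm. Qed.
Lemma cmetric_xx x : d x x = 0. Proof. exact/cmetric_eq0. Qed.
Lemma cmetricC x y : d x y = d y x. Proof. by case: dm. Qed.
Lemma cmetric_triangle x y z : d x z <= d x y + d y z. Proof. by case: dm. Qed.
Lemma nbhs_cmetricE x :
  nbhs x = filter_from [set e | 0 < e] (fun e => [set y | d x y < e]).
Proof. by case: dm. Qed.

Lemma nbhs_cmball x e : 0 < e -> nbhs x [set y | d x y < e].
Proof. by move=> e0; rewrite nbhs_cmetricE; exists e. Qed.

Lemma open_cmball x e : open [set y | d x y < e].
Proof.
rewrite openE => y /= dxy; rewrite /interior /=.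
have e0 : 0 < e - d x y by rewrite subr_gt0.
apply: (filterS _ (nbhs_cmball y e0)) => z /= dyz.
by apply: le_lt_trans (cmetric_triangle x y z) _; rewrite -ltrBrDl.
Qed.

Lemma compact_metric_dense_seq (x0 : T) :
  compact [set: T] -> exists a : nat -> T, dense_seq d a.
Proof.
move=> cT.
have net m : exists s : seq T, forall x, exists2 y, y \in s & d x y < m.+1%:R^-1.
  have cover x : exists y, d y x < m.+1%:R^-1 by exists x; rewrite cmetric_xx invr_gt0.
  have [D cov] := compact_finite_subcover
    (f := fun y => [set z | d y z < m.+1%:R^-1]) cT (fun y => open_cmball y _) cover.
  by exists D => x; have [y yD dyx] := cov x; exists y; rewrite // cmetricC.
have [s sP] := choice net.
(* [a] enumerates the points of all the nets [s m], indexed by [nat * nat]. *)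
pose a n := if (unpickle n : option (nat * nat)) is Some (m, j) then nth x0 (s m) j else x0.
exists a => x e e0; pose m := Num.truncn e^-1.
have [y ys dxy] := sP m x.
exists (pickle (m, index y (s m))); rewrite /a pickleK nth_index //.
apply: lt_trans dxy _; rewrite -[e]invrK ltf_pV2 ?posrE ?invr_gt0 //.
exact: truncnS_gt.
Qed.

Lemma compact_infinite_metric_limit_point :
  compact [set: T] -> infinite_set [set: T] ->
  exists xi, forall e, 0 < e -> exists y, 0 < d xi y < e.
Proof.
move=> cT infT; apply: contrapT => noacc.
have isolated x : exists e, 0 < e /\ forall y, d x y < e -> y = x.
  apply: contrapT => nx; apply: noacc; exists x => e e0.
  apply: contrapT => ny; apply: nx; exists e; split => // y dy.
  apply: contrapT => yx; apply: ny; exists y; rewrite dy andbT lt_neqAle cmetric_ge0.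
  by rewrite andbT; apply/eqP => /esym /cmetric_eq0 xy; apply: yx.
have [r rP] := choice isolated.
have cover y : exists x, d x y < r x by exists y; rewrite cmetric_xx; case: (rP y).
have [D cov] := compact_finite_subcover
  (f := fun x => [set y | d x y < r x]) cT (fun x => open_cmball x _) cover.
apply: infT; apply: (sub_finite_set _ (finite_seq D)) => y _.
by have [x xD dxy] := cov y; rewrite ((rP x).2 y dxy).
Qed.

Lemma compact_infinite_metric_separated_seq :
  compact [set: T] -> infinite_set [set: T] ->
  exists (xs : nat -> T) (w : nat -> R),
    (forall n, 0 < w n <= 1) /\ (forall n m, n != m -> 2 * w n <= d (xs n) (xs m)).
Proof.
move=> cT infT; have [xi xiP] := compact_infinite_metric_limit_point cT infT.
have [xs [in01 decay]] := halving_seq xiP.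
exists xs, (fun n => d xi (xs n) / 4); split.
  by move=> n; have /andP[? ?] := in01 n; apply/andP; split; lra.
move=> n m nm; have /andP[pn _] := in01 n; have /andP[pm _] := in01 m.
have tri1 := cmetric_triangle xi (xs n) (xs m).
have := cmetric_triangle xi (xs m) (xs n); rewrite [d (xs m) _]cmetricC => tri2.
have [/decay h|/decay h|eq_nm] := ltngtP n m; last by rewrite eq_nm eqxx in nm.
all: lra.
Qed.

Lemma dense_seq_continuous_eq (Z : topologicalType) (a : nat -> T) (h1 h2 : T -> Z) :
  dense_seq d a -> hausdorff_space Z -> continuous h1 -> continuous h2 ->
  (forall n, h1 (a n) = h2 (a n)) -> forall x, h1 x = h2 x.
Proof.
move=> ad hZ c1 c2 e x; apply: hZ => A B nA nB.
have : nbhs x (h1 @^-1` A `&` h2 @^-1` B) by apply: filterI; [exact: c1|exact: c2].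
rewrite nbhs_cmetricE => -[r r0 sr].
have [n dn] := ad x r r0; have [hA hB] := sr (a n) dn.
by exists (h1 (a n)); split => //; rewrite e.
Qed.

Lemma dense_seq_truncated_dist_eq (a : nat -> T) k1 k2 : dense_seq d a ->
  (forall n, Order.min 1 (d k1 (a n)) = Order.min 1 (d k2 (a n))) -> k1 = k2.
Proof.
move=> ad eqa; apply/cmetric_eq0/le_anti; rewrite cmetric_ge0 andbT.
apply/ler_addgt0Pr => e e0; rewrite add0r.
pose r := Order.min 1 (e / 2).
have r0 : 0 < r by rewrite lt_min ltr01 divr_gt0.
have r1 : r <= 1 by rewrite ge_min lexx.
have r2 : r <= e / 2 by rewrite ge_min lexx orbT.
have [n dn] := ad k1 r r0.
have : Order.min 1 (d k2 (a n)) < r.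
  by rewrite -eqa; apply: le_lt_trans dn; rewrite ge_min lexx orbT.
rewrite gt_min ltNge r1 /= => d2.
have := cmetric_triangle k1 (a n) k2; rewrite [d (a n) _]cmetricC.
lra.
Qed.

End compatible_metric.

Lemma continuous_pseudometric_comp {R : realType} {T U : topologicalType}
    (d : U -> U -> R) (h : T -> U) :
  continuous h -> continuous_pseudometric d ->
  continuous_pseudometric (fun x y => d (h x) (h y)).
Proof. by move=> hc [d0 dxx dC dtri dnbhs]; split => // x e /(dnbhs (h x))/hc. Qed.

Section ball_dist.
Context {R : realType} {Z : pseudoMetricType R}.

(* The alternative [1 <= e] keeps the defining set nonempty. *)
Definition ball_dist (z w : Z) : R := inf [set e : R | 0 < e /\ (1 <= e \/ ball z e w)].

Let ball_dist_set_neq0 (z w : Z) : [set e : R | 0 < e /\ (1 <= e \/ ball z e w)] !=set0.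
Proof. by exists 1; split; [exact: ltr01|left]. Qed.

Let ball_dist_set_lbound (z w : Z) : has_lbound [set e : R | 0 < e /\ (1 <= e \/ ball z e w)].
Proof. by exists 0 => e [e0 _]; exact: ltW. Qed.

Let ball_dist_ge0 (z w : Z) : 0 <= ball_dist z w.
Proof. by apply: lb_le_inf => // e [e0 _]; exact: ltW. Qed.

Let ball_dist_le (z w : Z) e : 0 < e -> ball z e w -> ball_dist z w <= e.
Proof. by move=> e0 b; apply: ge_inf => //; split => //; right. Qed.

Let ball_dist_lt (z w : Z) e : e <= 1 -> ball_dist z w < e -> ball z e w.
Proof.
move=> e1 /(inf_lt (ball_dist_set_neq0 z w)) [r [r0 [r1|b]] re].
  by move: (le_lt_trans r1 (lt_le_trans re e1)); rewrite ltxx.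
exact: le_ball (ltW re) _ b.
Qed.

Let ball_distC z w : ball_dist z w = ball_dist w z.
Proof.
suff le (z' w' : Z) : ball_dist z' w' <= ball_dist w' z' by apply/le_anti; rewrite !le.
apply: lb_le_inf => // e [e0 h]; apply: ge_inf => //; split => //.
by case: h => [|/ball_sym]; [left|right].
Qed.

Let ball_dist_triangle (z y w : Z) : ball_dist z w <= ball_dist z y + ball_dist y w.
Proof.
apply/ler_addgt0Pr => e e0.
have e20 : 0 < e / 2 by rewrite divr_gt0.
have [e1 [e10 h1] l1] :=
  inf_adherent e20 (conj (ball_dist_set_neq0 z y) (ball_dist_set_lbound z y)).
have [e2 [e20' h2] l2] :=
  inf_adherent e20 (conj (ball_dist_set_neq0 y w) (ball_dist_set_lbound y w)).
apply: le_trans (_ : e1 + e2 <= _).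
  apply: ge_inf => //; split; first by rewrite addr_gt0.
  case: h1 => [h1|b1]; first by left; rewrite (le_trans h1) // lerDl ltW.
  case: h2 => [h2|b2]; first by left; rewrite (le_trans h2) // lerDr ltW.
  by right; exact: ball_triangle b1 b2.
rewrite [e in _ <= _ + e]splitr addrACA; apply: ltW; exact: ltrD.
Qed.

Let ball_dist_xx (z : Z) : ball_dist z z = 0.
Proof.
apply/le_anti; rewrite ball_dist_ge0 andbT; apply/ler_addgt0Pr => e e0.
by rewrite add0r; apply: ball_dist_le => //; exact: ballxx.
Qed.

Let nbhs_ball_dist (z : Z) e : 0 < e -> nbhs z [set w | ball_dist z w < e].
Proof.
move=> e0; have e20 : 0 < e / 2 by rewrite divr_gt0.
apply: (filterS _ (nbhsx_ballx z (e / 2) e20)) => w b /=.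
apply: (@le_lt_trans _ _ (e / 2)); first exact: ball_dist_le.
by rewrite ltr_pdivrMr // ltr_pMr // ltr1n.
Qed.

Lemma ball_dist_pseudometric : continuous_pseudometric ball_dist.
Proof.
by split; [exact: ball_dist_ge0|exact: ball_dist_xx|exact: ball_distC
          |exact: ball_dist_triangle|exact: nbhs_ball_dist].
Qed.

Lemma ball_dist_eq0 : hausdorff_space Z -> forall z w, ball_dist z w = 0 -> z = w.
Proof.
move=> hZ z w d0; apply: hZ => A B /nbhs_ballP[e /= e0 sA] nB.
exists w; split; last exact: nbhs_singleton.
apply: sA; apply: (@le_ball _ _ z (Order.min e 1) e); first by rewrite ge_min lexx.
by apply: ball_dist_lt; rewrite ?ge_min ?lexx ?orbT // d0 lt_min e0 ltr01.
Qed.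

End ball_dist.

Section countable_pseudometrics.
Context {R : realType} {K : topologicalType} {I : countType} (rho : I -> K -> K -> R).
Hypotheses (cK : compact [set: K]) (hK : hausdorff_space K)
  (rho_pm : forall i, continuous_pseudometric (rho i))
  (rho_sep : forall x y, (forall i, rho i x y = 0) -> x = y).

Let rho_ge0 i x y : 0 <= rho i x y. Proof. by case: (rho_pm i). Qed.
Let rho_xx i x : rho i x x = 0. Proof. by case: (rho_pm i). Qed.
Let rhoC i x y : rho i x y = rho i y x. Proof. by case: (rho_pm i). Qed.
Let rho_triangle i x y z : rho i x z <= rho i x y + rho i y z.
Proof. by case: (rho_pm i). Qed.
Let nbhs_rho i x e : 0 < e -> nbhs x [set y | rho i x y < e].
Proof. by case: (rho_pm i) => _ _ _ _; apply. Qed.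

Let w (i : I) : R := (pickle i).+1%:R^-1.
Let c i x y := Order.min (w i) (rho i x y).
(* [D x y = sup_i min (w i) (rho i x y)]; the [0] keeps the set nonempty. *)
Let D x y := sup [set r : R | r = 0 \/ exists i, r = c i x y].

Let w_gt0 i : 0 < w i. Proof. by rewrite invr_gt0 ltr0Sn. Qed.
Let w_le1 i : w i <= 1. Proof. by rewrite invf_le1 ?ltr0Sn // ler1n. Qed.

Let w_lt i e : 0 < e -> (Num.truncn e^-1 <= pickle i)%N -> w i < e.
Proof.
move=> e0 Ni; apply: (@le_lt_trans _ _ (Num.truncn e^-1).+1%:R^-1).
  by rewrite lef_pV2 ?posrE ?ltr0Sn // ler_nat ltnS.
by rewrite invf_plt ?posrE ?ltr0Sn //; exact: truncnS_gt.
Qed.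

Let D_set_ubound x y : has_ubound [set r : R | r = 0 \/ exists i, r = c i x y].
Proof. by exists 1 => r [->|[i ->]]; [exact: ler01|rewrite ge_min w_le1]. Qed.

Let c_le_D i x y : c i x y <= D x y.
Proof. by apply: ub_le_sup; [exact: D_set_ubound|right; exists i]. Qed.

Let D_ge0 x y : 0 <= D x y.
Proof. by apply: ub_le_sup; [exact: D_set_ubound|left]. Qed.

Let D_le x y e : 0 <= e -> (forall i, c i x y <= e) -> D x y <= e.
Proof. by move=> e0 ce; apply: ge_sup; [exists 0; left|move=> r [->|[i ->]]]. Qed.

Let DC x y : D x y = D y x.
Proof. by apply/le_anti/andP; split; apply: D_le => // i; rewrite /c rhoC; exact: c_le_D. Qed.

Let D_triangle x y z : D x z <= D x y + D y z.
Proof.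
apply: D_le => [|i]; first by rewrite addr_ge0.
apply: le_trans (lerD (c_le_D i x y) (c_le_D i y z)).
have := rho_triangle i x y z; have := rho_ge0 i x y; have := rho_ge0 i y z.
rewrite /c /Order.min; have := w_gt0 i.
by case: (ltP (w i) (rho i x z)); case: (ltP (w i) (rho i x y));
  case: (ltP (w i) (rho i y z)); lra.
Qed.

Let D_xx x : D x x = 0.
Proof.
apply/le_anti/andP; split => //; apply: D_le => // i.
by rewrite /c rho_xx ge_min lexx orbT.
Qed.

Let D_eq0 x y : D x y = 0 -> x = y.
Proof.
move=> Dxy; apply: rho_sep => i; apply/eqP; rewrite eq_le rho_ge0 andbT.
have : c i x y <= 0 by rewrite -Dxy c_le_D.
by rewrite ge_min leNgt w_gt0.
Qed.

(* Only finitely many [rho i] have weight [w i >= e], hence [D]-balls are neighbourhoods. *)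
Let nbhs_D_ball x e : 0 < e -> nbhs x [set y | D x y < e].
Proof.
move=> e0; have e20 : 0 < e / 2 by rewrite divr_gt0.
pose N := Num.truncn (e / 2)^-1.
have near_all : \forall y \near x, forall j : 'I_N, forall i, pickle i = j -> rho i x y < e / 2.
  apply: (filter_forall (nbhs_filter x)) => j.
  have [[i0 ij]|nj] := pselect (exists i : I, pickle i = j); last first.
    by apply: nearW => y i ij; exfalso; apply: nj; exists i.
  apply: (filterS _ (nbhs_rho i0 x e20)) => y h i ij'.
  by rewrite (pcan_inj pickleK (etrans ij' (esym ij))).
apply: (filterS _ near_all) => y near_y /=.
apply: le_lt_trans (_ : e / 2 < e); last by rewrite ltr_pdivrMr // ltr_pMr // ltr1n.
apply: D_le => [|i]; first exact: ltW.
have [lt|ge] := ltnP (pickle i) N.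
  by rewrite ge_min (ltW (near_y (Ordinal lt) i erefl)) orbT.
by rewrite ge_min (ltW (w_lt e20 ge)).
Qed.

Let D_balls x := filter_from [set e : R | 0 < e] (fun e => [set y | D x y < e]).

Let D_balls_proper x : ProperFilter (D_balls x).
Proof.
apply: filter_from_proper; last by move=> e e0; exists x; rewrite /= D_xx.
apply: filter_from_filter; first by exists 1; exact: ltr01.
move=> e1 e2 e10 e20; exists (Order.min e1 e2); first by rewrite /= lt_min e10.
by move=> y /=; rewrite lt_min => /andP[].
Qed.

Let cluster_D_balls x : cluster (D_balls x) = [set x].
Proof.
rewrite eqEsubset; split => y; last first.
  move=> -> U V [e e0 sU] nV; exists x; split; last exact: nbhs_singleton.
  by apply: sU; rewrite /= D_xx.
move=> cy; apply/esym/rho_sep => i; apply: contrapT => ne.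
have rxy : 0 < rho i x y by rewrite lt_neqAle eq_sym rho_ge0 andbT; apply/eqP.
pose r := rho i x y / 2.
have r0 : 0 < r by rewrite divr_gt0.
have Bx : D_balls x [set z | D x z < Order.min (w i) r].
  by exists (Order.min (w i) r) => //; rewrite /= lt_min w_gt0 r0.
have [z [Bz Vz]] := cy _ _ Bx (nbhs_rho i y r0).
have rz : rho i x z < r.
  have := le_lt_trans (c_le_D i x z) Bz; rewrite /c lt_min !gt_min ltxx /=.
  by case/andP => zw /orP[wr|//]; exact: lt_trans zw wr.
have := rho_triangle i x z y; rewrite (rhoC i z y).
by move: rz Vz; rewrite /r /=; lra.
Qed.

Lemma compact_separating_pseudometrics_metrizable : metrizable R K.
Proof.
exists D; split; [exact: D_ge0|split=> [/D_eq0 //|->]; exact: D_xx|exact: DC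
                 |exact: D_triangle|move=> x].
rewrite eqEsubset; split => A; last by move=> [e e0 sA]; exact: (filterS sA (nbhs_D_ball x e0)).
have := compact_cluster_set1 hK cK filterT (D_balls_proper x) filterT (cluster_D_balls x).
by move=> /(_ (nbhs_filter x) (D_balls_proper x)); apply.
Qed.

End countable_pseudometrics.

Section cross_uniform.
Context {X Y : topologicalType} {Z : uniformType}.

Lemma cross_uniform_eval_continuous (p : X * Y) :
  continuous (fun s : cross_uniform X Y Z => s p).
Proof.
move=> s W /nbhsP[E entE sW].
have := @fam_nbhs _ _ (@crosses X Y) (cross p) E s entE (ex_intro _ p erefl).
by apply: filterS => t /= h; apply: sW; apply/xsectionP; apply: h; left.
Qed.

Lemma cross_uniform_hausdorff :
  hausdorff_space Z -> hausdorff_space (cross_uniform X Y Z).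
Proof.
move=> hZ s t cst; apply: funext => p; apply: hZ => A B nA nB.
have ev := cross_uniform_eval_continuous (p := p).
by have [u [Au Bu]] := cst _ _ (ev s _ nA) (ev t _ nB); exists (u p).
Qed.

End cross_uniform.

Lemma continuous_into_cross_uniform {R : realType} {K X Y : topologicalType}
    {Z : pseudoMetricType R} (f : K -> cross_uniform X Y Z) :
  (forall k e, 0 < e -> \forall k' \near k, forall p, ball (f k p) e (f k' p)) ->
  continuous f.
Proof.
move=> unif k; apply/fam_cvgP => A _.
apply: (@uniform_subset_cvg _ _ _ setT) => // P /uniform_nbhs[E [entE sP]].
move: entE; rewrite -entourage_ballE => -[e /= e0 sE].
by apply: (filterS _ (unif k e e0)) => k' near_k'; apply: sP => p _; apply: sE; exact: near_k'.
Qed.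

Lemma compact_uniform_near {R : realType} {K T : topologicalType}
    {Z : pseudoMetricType R} (F : K -> T -> Z) :
  compact [set: T] -> continuous (fun p : K * T => F p.1 p.2) ->
  forall k e, 0 < e -> \forall k' \near k, forall x, ball (F k x) e (F k' x).
Proof.
move=> cT Fc k e e0; have e20 : 0 < e / 2 by rewrite divr_gt0.
suff : \forall k' \near k, [set: T] `<=` (fun x => ball (F k x) e (F k' x)).
  by apply: filterS => k' h x; exact: h.
apply: ((compact_near_coveringP _).1 cT) => x _.
have [[P Q] [Pk Qx] PQ] : nbhs (k, x) [set p : K * T | ball (F k x) (e / 2) (F p.1 p.2)].
  by apply: Fc; exact: nbhsx_ballx.
exists (Q, P) => //= -[x' k'] /= [Qx' Pk'].
apply: (@ball_splitl _ _ (F k x)); apply: ball_sym.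
  by apply: (PQ (k, x')); split => //; exact: nbhs_singleton.
exact: (PQ (k', x')).
Qed.

Lemma compact_injective_embedding (A B : topologicalType) (f : A -> B) :
  compact [set: A] -> hausdorff_space B -> injective f -> continuous f -> embedding f.
Proof.
move=> cA hB finj fc; split => // U oU.
exists (~` (f @` ~` U)); split.
  apply: closed_openC; apply: compact_closed hB _.
  apply: continuous_compact; first exact: continuous_subspaceT.
  by apply: subclosed_compact cA _ => //; exact: open_closedC.
apply/seteqP; split => [_ [a Ua <-]|_ [[a _ <-] nfa]].
  by split; [exists a|move=> [a' nUa' /finj ea]; apply: nUa'; rewrite ea].
by exists a => //; apply: contrapT => nUa; apply: nfa; exists a.
Qed.

Section coding.
Context {R : realType} {K T : topologicalType} {dK : K -> K -> R} {dT : T -> T -> R}.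
Hypotheses (dKm : compatible_metric dK) (dTm : compatible_metric dT).
Context {q : nat -> K} {xs : nat -> T} {w : nat -> R}.
Hypotheses (w_range : forall n, 0 < w n <= 1)
  (xs_sep : forall n m, n != m -> 2 * w n <= dT (xs n) (xs m)).

Let code_term k x n := dT x (xs n) + w n * Order.min 1 (dK k (q n)).
Definition dist_code k x := inf (range (code_term k x)).

Let w_gt0 n : 0 < w n. Proof. by case/andP: (w_range n). Qed.
Let w_le1 n : w n <= 1. Proof. by case/andP: (w_range n). Qed.

Let truncated_ge0 k k' : 0 <= Order.min 1 (dK k k').
Proof. by rewrite le_min ler01 cmetric_ge0. Qed.

Let truncated_lipschitz k k' p :
  Order.min 1 (dK k p) <= Order.min 1 (dK k' p) + dK k k'.
Proof.
have := cmetric_triangle dKm k k' p; have := cmetric_ge0 dKm k k'.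
rewrite /Order.min.
by case: (ltP 1 (dK k p)); case: (ltP 1 (dK k' p)); lra.
Qed.

Let code_term_lbound k x : has_lbound (range (code_term k x)).
Proof.
exists 0 => _ [n _ <-].
by rewrite addr_ge0 ?(cmetric_ge0 dTm) // mulr_ge0 ?truncated_ge0 // ltW.
Qed.

Let dist_code_le n k x : dist_code k x <= code_term k x n.
Proof. by apply: ge_inf; [exact: code_term_lbound|exists n]. Qed.

Lemma dist_code_lipschitz k x k' x' : dist_code k x <= dist_code k' x' + (dT x x' + dK k k').
Proof.
rewrite -lerBlDr; apply: lb_le_inf; first by exists (code_term k' x' 0), 0%N.
move=> _ [n _ <-]; rewrite lerBlDr; apply: le_trans (dist_code_le n k x) _; rewrite /code_term.
have := cmetric_triangle dTm x x' (xs n); have := truncated_lipschitz k k' (q n).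
have := w_le1 n; have := w_gt0 n; have := cmetric_ge0 dKm k k'.
have := truncated_ge0 k' (q n).
nra.
Qed.

(* The separation [2 * w n <= dT (xs n) (xs m)] makes the infimum at [xs n] attained at [n]. *)
Lemma dist_code_xs n k : dist_code k (xs n) = w n * Order.min 1 (dK k (q n)).
Proof.
apply/le_anti/andP; split.
  by apply: le_trans (dist_code_le n k (xs n)) _; rewrite /code_term (cmetric_xx dTm) add0r.
apply: lb_le_inf; first by exists (code_term k (xs n) 0), 0%N.
move=> _ [m _ <-]; rewrite /code_term.
have [->|nm] := eqVneq n m; first by rewrite (cmetric_xx dTm) add0r.
have := xs_sep nm; have := w_gt0 n; have := truncated_ge0 k (q n).
have := mulr_ge0 (ltW (w_gt0 m)) (truncated_ge0 k (q m)).
have : Order.min 1 (dK k (q n)) <= 1 by rewrite ge_min lexx.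
nra.
Qed.

Lemma dist_code_continuous : continuous (fun p : K * T => dist_code p.1 p.2).
Proof.
move=> [k x] S /nbhs_ballP[e /= e0 sS]; have e20 : 0 < e / 2 by rewrite divr_gt0.
exists ([set k' | dK k k' < e / 2], [set x' | dT x x' < e / 2]).
  by split; [exact: nbhs_cmball|exact: nbhs_cmball].
move=> [k' x'] /= [hk hx]; apply: sS; rewrite -ball_normE /= ltr_norml.
have := dist_code_lipschitz k x k' x'; have := dist_code_lipschitz k' x' k x.
by rewrite (cmetricC dKm k') (cmetricC dTm x'); move=> *; apply/andP; split; lra.
Qed.

Lemma dist_code_inj : dense_seq dK q -> injective dist_code.
Proof.
move=> qd k1 k2 eq12; apply: (dense_seq_truncated_dist_eq dKm qd) => n.
by apply: (mulfI (lt0r_neq0 (w_gt0 n))); rewrite -!dist_code_xs eq12.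
Qed.

End coding.
Arguments dist_code {R K T} dK dT q xs w k x.

Lemma embeds_into_of_empty (A B : topologicalType) (S : set B) (b : B) :
  S b -> ~ (exists a : A, True) -> embeds_into A S.
Proof.
move=> Sb A0; have noA (a : A) : False by apply: A0; exists a.
exists (fun=> b); split => [a|]; first by have := noA a.
split => [a1 a2 _|a|U _]; [by have := noA a1|by have := noA a|].
exists setT; split; first exact: openT.
by rewrite setIT; apply/seteqP; split => z [a]; have := noA a.
Qed.

Lemma Ssep_embedding_metrizable {R : realType} {X Y : topologicalType}
    {Z : pseudoMetricType R} (x0 : X) (y0 : Y) (K : topologicalType) :
  compact [set: X] -> metrizable R X -> compact [set: Y] -> metrizable R Y ->
  hausdorff_space Z -> compact [set: K] -> hausdorff_space K ->
  embeds_into K (Ssep X Y Z) -> metrizable R K.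
Proof.
move=> cX mX cY mY hZ cK hK [f [fS [finj fc _]]].
have [dX dXm] : exists dX : X -> X -> R, compatible_metric dX := mX.
have [dY dYm] : exists dY : Y -> Y -> R, compatible_metric dY := mY.
have [aX aXd] := compact_metric_dense_seq dXm x0 cX.
have [aY aYd] := compact_metric_dense_seq dYm y0 cY.
pose rho (i : nat * nat) (k k' : K) :=
  ball_dist (f k (aX i.1, aY i.2)) (f k' (aX i.1, aY i.2)).
apply: (compact_separating_pseudometrics_metrizable (rho := rho)) => // [i|k k' rho0].
  apply: continuous_pseudometric_comp ball_dist_pseudometric => k.
  exact: (continuous_comp (fc k) (@cross_uniform_eval_continuous X Y Z _ _)).
have grid n m : f k (aX n, aY m) = f k' (aX n, aY m).
  by apply: (ball_dist_eq0 hZ); exact: (rho0 (n, m)).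
apply: finj; apply: funext => -[x y].
apply: (dense_seq_continuous_eq dXm aXd hZ ((fS k).2 y) ((fS k').2 y)) => n.
by apply: (dense_seq_continuous_eq dYm aYd hZ ((fS k).1 _) ((fS k').1 _)) => m.
Qed.

Lemma metrizable_Ssep_embedding {R : realType} {X Y : topologicalType}
    {Z : pseudoMetricType R} (y0 : Y) (g : R -> Z) (K : topologicalType) :
  compact [set: X] -> metrizable R X -> infinite_set [set: X] ->
  hausdorff_space Z -> continuous g -> injective g ->
  compact [set: K] -> metrizable R K -> embeds_into K (Ssep X Y Z).
Proof.
move=> cX mX infX hZ gc ginj cK mK.
have [dX dXm] : exists dX : X -> X -> R, compatible_metric dX := mX.
have [dK dKm] : exists dK : K -> K -> R, compatible_metric dK := mK.
have [xs [w [w_range xs_sep]]] := compact_infinite_metric_separated_seq dXm cX infX.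
have [[k0 _]|K0] := pselect (exists k : K, True); last first.
  apply: (@embeds_into_of_empty K _ (Ssep X Y Z) (fun=> g 0) _ K0).
  by split=> ?; exact: cst_continuous.
have [q qd] := compact_metric_dense_seq dKm k0 cK.
pose c := dist_code dK dX q xs w.
have gc_cont : continuous (fun p : K * X => g (c p.1 p.2)).
  move=> p; apply: (continuous_comp (f := fun p : K * X => c p.1 p.2)) (gc _).
  exact: dist_code_continuous.
exists (fun k => (fun p => g (c k p.1)) : cross_uniform X Y Z); split.
  move=> k; split => [x|y x]; first exact: (@cst_continuous Y Z (g (c k x))).
  apply: (continuous_comp (f := fun x' : X => (k, x')) _ (gc_cont (k, x))).
  by apply: cvg_pair => /=; [exact: cvg_cst|exact: cvg_id].
apply: compact_injective_embedding => //; first exact: cross_uniform_hausdorff.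
  move=> k1 k2 e12.
  apply: (dist_code_inj dKm dXm w_range xs_sep qd); apply/funext => x; apply: ginj.
  exact: (congr1 (fun s => s (x, y0)) e12).
apply: continuous_into_cross_uniform => k e e0.
have := compact_uniform_near (F := fun k x => g (c k x)) cX gc_cont k e0.
by apply: filterS => k' near_k' [x y]; exact: near_k' x.
Qed.

Theorem corollary7p2 (R : realType) (X Y : topologicalType)
  (Z : pseudoMetricType R) :
  compact [set: X] -> hausdorff_space X -> metrizable R X -> infinite_set [set: X] ->
  compact [set: Y] -> hausdorff_space Y -> metrizable R Y -> infinite_set [set: Y] ->
  hausdorff_space Z ->
  (exists g : R -> Z, embedding g) ->
  forall K : topologicalType, compact [set: K] -> hausdorff_space K ->
    (embeds_into K (Ssep X Y Z) <-> metrizable R K).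
Proof.
move=> cX _ mX infX cY _ mY infY hZ [g [ginj gc _]] K cK hK.
have [x0 _] := infinite_setN0 infX.
have [y0 _] := infinite_setN0 infY.
split; first exact: Ssep_embedding_metrizable.
exact: metrizable_Ssep_embedding.
Qed.
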